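(* For the modular data of the quantum double of $S_3$, each of the trace two modular invariants $Z_3,Z_{23},Z_{32},Z_{45},Z_{54},Z_{(45)},Z_{(54)}$ has, up to equivalence, exactly one matching nimrep.
   Context: Primaries $0,\dots,7$, all self-conjugate, with $S=\frac16\begin{pmatrix}1&1&2&2&2&2&3&3\\1&1&2&2&2&2&-3&-3\\2&2&4&-2&-2&-2&0&0\\2&2&-2&4&-2&-2&0&0\\2&2&-2&-2&-2&4&0&0\\2&2&-2&-2&4&-2&0&0\\3&-3&0&0&0&0&3&-3\\3&-3&0&0&0&0&-3&3\end{pmatrix}$, fusion coefficients $N_{\lambda\mu}^\nu=\sum_\rho S_{\lambda\rho}S_{\mu\rho}\overline{S_{\nu\rho}}/S_{0\rho}$. Matrices are written as $\sum Z_{\lambda\mu}\chi_\lambda\chi_\mu^*$, and for linear forms $s,t$ in the $\chi$'s, $st^*$ is the matrix of products of coefficients. $Z_3=|\chi_0+\chi_1+\chi_2+\chi_3|^2+\chi_2\chi_3^*+\chi_3\chi_2^*-|\chi_2|^2-|\chi_3|^2$. With $s_2=\chi_0+\chi_1+2\chi_2$, $s_3=\chi_0+\chi_1+2\chi_3$, $s_4=\chi_0+\chi_2+\chi_6$, $s_5=\chi_0+\chi_3+\chi_6$: $Z_{ij}=s_is_j^*$. $Z_{(45)}=(\chi_0+\chi_3)(\chi_0+\chi_2)^*+\chi_1\chi_6^*+\chi_3\chi_6^*+\chi_6\chi_1^*+\chi_6\chi_2^*+|\chi_7|^2$, $Z_{(54)}=Z_{(45)}^t$. A nimrep of dimension $n$: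 non-negative integer $n\times n$ matrices $G_\lambda$ with $G_0=I$, $G_{\bar\lambda}=G_\lambda^t$, $G_\lambda G_\mu=\sum_\nu N_{\lambda\mu}^\nu G_\nu$; nimreps are equivalent if conjugate by a common permutation matrix. $\mathrm{Exp}(Z)$ is the multiset with $Z_{\mu\mu}$ copies of $\mu$. A nimrep matches $Z$ if $n=\mathrm{Tr}\,Z$ and the $G_\lambda$ are simultaneously unitarily diagonalisable with joint eigenvalues $(S_{\lambda\mu}/S_{0\mu})_\lambda$, $\mu$ running through $\mathrm{Exp}(Z)$ with multiplicity. *)

From mathcomp Require Import all_boot all_order all_algebra all_field.
Set Implicit Arguments. Unset Strict Implicit. Unset Printing Implicit Defensive.
Import Order.TTheory GRing.Theory Num.Theory.
Local Open Scope ring_scope.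

Definition prim := 'I_8.

Definition S_int : seq (seq int) :=
  [:: [:: 1; 1; 2; 2; 2; 2; 3; 3];
      [:: 1; 1; 2; 2; 2; 2; -3; -3];
      [:: 2; 2; 4; -2; -2; -2; 0; 0];
      [:: 2; 2; -2; 4; -2; -2; 0; 0];
      [:: 2; 2; -2; -2; -2; 4; 0; 0];
      [:: 2; 2; -2; -2; 4; -2; 0; 0];
      [:: 3; -3; 0; 0; 0; 0; 3; -3];
      [:: 3; -3; 0; 0; 0; 0; -3; 3]]%R.

Definition Smat : 'M[algC]_8 :=
  \matrix_(i < 8, j < 8) ((nth 0 (nth [::] S_int i) j)%:~R / 6%:R).

Definition Nfus (lam mu nu : prim) : algC :=
  \sum_(rho < 8) Smat lam rho * Smat mu rho * (Smat nu rho)^* / Smat 0 rho.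

(* Linear forms in the characters, as coefficient row vectors. *)
Definition chi (k : nat) : 'rV[int]_8 := delta_mx 0 (@inord 7 k).
(* s t^* : matrix of products of coefficients (coefficients are integers,
   so complex conjugation is trivial). *)
Definition outer (s t : 'rV[int]_8) : 'M[int]_8 := s^T *m t.

Definition Z3 : 'M[int]_8 :=
  outer (chi 0 + chi 1 + chi 2 + chi 3) (chi 0 + chi 1 + chi 2 + chi 3)
  + outer (chi 2) (chi 3) + outer (chi 3) (chi 2)
  - outer (chi 2) (chi 2) - outer (chi 3) (chi 3).

Definition s2 : 'rV[int]_8 := chi 0 + chi 1 + 2%:Z *: chi 2.
Definition s3 : 'rV[int]_8 := chi 0 + chi 1 + 2%:Z *: chi 3.
Definition s4 : 'rV[int]_8 := chi 0 + chi 2 + chi 6.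
Definition s5 : 'rV[int]_8 := chi 0 + chi 3 + chi 6.

Definition Z23 := outer s2 s3.
Definition Z32 := outer s3 s2.
Definition Z45 := outer s4 s5.
Definition Z54 := outer s5 s4.

Definition Z45p : 'M[int]_8 :=
  outer (chi 0 + chi 3) (chi 0 + chi 2) + outer (chi 1) (chi 6)
  + outer (chi 3) (chi 6) + outer (chi 6) (chi 1) + outer (chi 6) (chi 2)
  + outer (chi 7) (chi 7).
Definition Z54p : 'M[int]_8 := Z45p^T.

Definition natmx_C n (A : 'M[nat]_n) : 'M[algC]_n := map_mx (fun x : nat => x%:R) A.

Definition pconj (lam : prim) : prim := lam.

Definition is_nimrep n (G : prim -> 'M[nat]_n) : Prop :=
  [/\ natmx_C (G 0) = 1%:M,
      (forall lam, G (pconj lam) = (G lam)^T) &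
      (forall lam mu, natmx_C (G lam) *m natmx_C (G mu)
                      = \sum_(nu < 8) Nfus lam mu nu *: natmx_C (G nu))].

(* Equivalence: conjugation by a common permutation matrix, written entrywise
   (a bijection 'I_m -> 'I_n exists only when m = n). *)
Definition nimrep_equiv n m (G : prim -> 'M[nat]_n) (H : prim -> 'M[nat]_m) : Prop :=
  exists f : 'I_m -> 'I_n, bijective f /\
    forall lam i j, H lam i j = G lam (f i) (f j).

Definition adjmx n (U : 'M[algC]_n) : 'M[algC]_n := (map_mx (fun x : algC => x^*) U)^T.

(* A nimrep matches Z: n = Tr Z, and the G_lam are simultaneously unitarily
   diagonalisable with joint eigenvalues (S_{lam mu}/S_{0 mu})_lam, where mu
   runs through Exp(Z) with multiplicity (mu_ : 'I_n -> prim takes each value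
   nu exactly Z_{nu nu} times). *)
Definition matches (Z : 'M[int]_8) n (G : prim -> 'M[nat]_n) : Prop :=
  \tr Z = n%:Z /\
  exists (mu_ : 'I_n -> prim) (U : 'M[algC]_n),
    [/\ (forall nu : prim, (#|[pred i | mu_ i == nu]|)%:Z = Z nu nu),
        U *m adjmx U = 1%:M &
        (forall lam, adjmx U *m natmx_C (G lam) *m U
                     = diag_mx (\row_i (Smat lam (mu_ i) / Smat 0 (mu_ i))))].

From mathcomp Require Import all_boot all_order all_algebra all_field.
From mathcomp Require Import ring.
Import GRing.Theory Num.Theory.
Local Open Scope ring_scope.
Set Implicit Arguments. Unset Strict Implicit. Unset Printing Implicit Defensive.

(* Each of these invariants has trace 2 and exponents {0, m} with m in {1, 6, 7}, so a
   matching nimrep consists of 2x2 matrices G_lam = U diag(E_lam(0), E_lam(m)) U^*, where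
   E_lam(mu) = S_{lam mu} / S_{0 mu}.  For a suitable lam0 we have E_lam0(0) = x = -E_lam0(m)
   with x > 0, so G_lam0 is a symmetric nonnegative integer matrix of trace 0 and square x^2,
   which forces G_lam0 = [[0, x], [x, 0]].  On the exponents E_lam is an affine function of
   E_lam0, hence every G_lam is the same affine combination of 1 and G_lam0: the circulant
   [[a, b], [b, a]] with a + b = E_lam(0) and a - b = E_lam(m).  Conversely the Hadamard
   matrix diagonalises these circulants, and the Verlinde formula makes them a nimrep. *)

Definition Sn (i j : nat) : int := nth 0 (nth [::] S_int i) j.

Lemma SmatE (i j : prim) : Smat i j = (Sn i j)%:~R / 6%:R.
Proof. by rewrite mxE. Qed.

Lemma conj_Smat (i j : prim) : (Smat i j)^* = Smat i j.
Proof. by rewrite SmatE fmorph_div rmorph_int rmorph_nat. Qed.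

Lemma Sn_orthogonal (s r : prim) :
  \sum_(v < 8) Sn v s * Sn v r = 36 * (s == r)%:R.
Proof.
rewrite !big_ord_recr big_ord0 /=.
by case: s => [[|[|[|[|[|[|[|[|?]]]]]]]] ?] //; case: r => [[|[|[|[|[|[|[|[|?]]]]]]]] ?].
Qed.

Lemma Smat_orthogonal (s r : prim) :
  \sum_(v < 8) (Smat v s)^* * Smat v r = (s == r)%:R.
Proof.
transitivity ((\sum_(v < 8) Sn v s * Sn v r)%:~R / 36%:R : algC).
  rewrite rmorph_sum mulr_suml; apply: eq_bigr => v _.
  by rewrite conj_Smat !SmatE rmorphM /=; field.
rewrite Sn_orthogonal; case: (s == r); rewrite ?mulr0 ?mul0r // mulr1.
by rewrite divff // pnatr_eq0.
Qed.

Lemma Smat0_neq0 (r : prim) : Smat 0 r != 0.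
Proof.
rewrite SmatE mulf_neq0 ?invr_eq0 ?pnatr_eq0 // intr_eq0.
by case: r => [[|[|[|[|[|[|[|[|?]]]]]]]] ?].
Qed.

Definition eigS (lam mu : prim) : algC := Smat lam mu / Smat 0 mu.

Lemma eigS0 (mu : prim) : eigS 0 mu = 1.
Proof. by rewrite /eigS divff ?Smat0_neq0. Qed.

Lemma eigS_fusion (l m r : prim) :
  eigS l r * eigS m r = \sum_(nu < 8) Nfus l m nu * eigS nu r.
Proof.
rewrite /Nfus /eigS; under eq_bigr do rewrite mulr_suml.
have factor s : \sum_(v < 8) Smat l s * Smat m s * (Smat v s)^* / Smat 0 s
                              * (Smat v r / Smat 0 r)
    = Smat l s * Smat m s / Smat 0 s / Smat 0 r
      * \sum_(v < 8) (Smat v s)^* * Smat v r.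
  by rewrite mulr_sumr; apply: eq_bigr => v _; ring.
rewrite exchange_big (bigD1 r) //= [X in _ + X]big1 => [|s /negbTE s_neq_r].
  by rewrite factor Smat_orthogonal eqxx addr0 mulr1; ring.
by rewrite factor Smat_orthogonal s_neq_r mulr0.
Qed.

Definition eigZ (lam mu : prim) : int := (Sn lam mu %/ Sn 0 mu)%Z.

Lemma eigS_int (lam mu : prim) : eigS lam mu = (eigZ lam mu)%:~R.
Proof.
have Sn_eigZ : Sn lam mu = eigZ lam mu * Sn 0 mu.
  by case: lam => [[|[|[|[|[|[|[|[|?]]]]]]]] ?] //; case: mu => [[|[|[|[|[|[|[|[|?]]]]]]]] ?].
have := Smat0_neq0 mu; rewrite /eigS !SmatE Sn_eigZ rmorphM /= => S0mu_neq0.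
by rewrite -[_ * _ / 6]mulrA mulfK.
Qed.

Definition eigdiag n (mu_ : 'I_n -> prim) (lam : prim) : 'M[algC]_n :=
  diag_mx (\row_i eigS lam (mu_ i)).

Lemma eigdiag0 n (mu_ : 'I_n -> prim) : eigdiag mu_ 0 = 1%:M.
Proof.
rewrite /eigdiag -diag_const_mx; congr diag_mx.
by apply/rowP => i; rewrite !mxE eigS0.
Qed.

Lemma eigdiag_fusion n (mu_ : 'I_n -> prim) (l m : prim) :
  eigdiag mu_ l *m eigdiag mu_ m = \sum_(nu < 8) Nfus l m nu *: eigdiag mu_ nu.
Proof.
rewrite mulmx_diag; apply/matrixP => i j; rewrite summxE !mxE.
under eq_bigr do rewrite !mxE.
case: (i == j); rewrite ?mulr1n ?mulr0n ?eigS_fusion //.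
by rewrite big1 // => nu _; rewrite mulr0.
Qed.

Section Spectral.

Variables (n : nat) (U : 'M[algC]_n) (mu_ : 'I_n -> prim) (G : prim -> 'M[nat]_n).
Hypothesis U_unitary : U *m adjmx U = 1%:M.
Hypothesis G_diag : forall lam, adjmx U *m natmx_C (G lam) *m U = eigdiag mu_ lam.

Let adjU_U : adjmx U *m U = 1%:M. Proof. exact: mulmx1C. Qed.

Lemma spectral_decomposition lam : natmx_C (G lam) = U *m eigdiag mu_ lam *m adjmx U.
Proof. by rewrite -G_diag !mulmxA U_unitary mul1mx -mulmxA U_unitary mulmx1. Qed.

Lemma spectral_nimrep : (forall lam, (G lam)^T = G lam) -> is_nimrep G.
Proof.
move=> G_sym; split=> [|lam|l m]; first by rewrite spectral_decomposition eigdiag0 mulmx1.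
  by rewrite G_sym.
rewrite !spectral_decomposition.
under eq_bigr do rewrite spectral_decomposition scalemxAl scalemxAr.
rewrite -mulmx_suml -mulmx_sumr -eigdiag_fusion !mulmxA.
by rewrite -(mulmxA _ (adjmx U) U) adjU_U mulmx1.
Qed.

Lemma spectral_affine lam lb (c d : algC) :
  (forall i, eigS lam (mu_ i) = c + d * eigS lb (mu_ i)) ->
  natmx_C (G lam) = c%:M + d *: natmx_C (G lb).
Proof.
move=> affine; rewrite !spectral_decomposition.
have -> : eigdiag mu_ lam = c%:M + d *: eigdiag mu_ lb.
  by apply/matrixP => i j; rewrite !mxE affine; case: (i == j); rewrite ?mulr0 ?addr0.
by rewrite mulmxDr mulmxDl mul_mx_scalar -scalemxAl U_unitary scalemx1 -scalemxAr -scalemxAl.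
Qed.

Lemma spectral_sqr lb (c : algC) :
  (forall i, eigS lb (mu_ i) ^+ 2 = c) ->
  natmx_C (G lb) *m natmx_C (G lb) = c%:M.
Proof.
move=> sqr; rewrite spectral_decomposition !mulmxA -(mulmxA _ (adjmx U) U) adjU_U.
rewrite mulmx1 -(mulmxA U).
have -> : eigdiag mu_ lb *m eigdiag mu_ lb = c%:M.
  by apply/matrixP => i j; rewrite mulmx_diag !mxE -expr2 sqr.
by rewrite -mulmxA mul_scalar_mx -scalemxAr U_unitary scalemx1.
Qed.

Lemma spectral_trace lam : \tr (natmx_C (G lam)) = \sum_i eigS lam (mu_ i).
Proof.
rewrite spectral_decomposition mxtrace_mulC mulmxA adjU_U mul1mx mxtrace_diag.
by apply: eq_bigr => i _; rewrite mxE.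
Qed.

End Spectral.

Lemma sum_over_fibers (I T : finType) (V : nmodType) (f : I -> T) (F : T -> V) :
  \sum_i F (f i) = \sum_t F t *+ #|[pred i | f i == t]|.
Proof.
rewrite (partition_big f xpredT) //=; apply: eq_bigr => t _.
by rewrite -sumr_const; apply: eq_big => [i|i /eqP <-].
Qed.

Lemma sum_indicator2 (T : finType) (V : nmodType) (a b : T) (F : T -> V) :
  a != b -> \sum_t F t *+ ((t == a) || (t == b)) = F a + F b.
Proof.
move=> a_neq_b; rewrite (bigD1 a) // (bigD1 b) 1?eq_sym //= !eqxx orbT.
rewrite big1 ?addr0 // => t /andP[t_neq_b t_neq_a].
by rewrite (negbTE t_neq_a) (negbTE t_neq_b).
Qed.

Lemma ord2_cases (i : 'I_2) : i = 0 \/ i = 1.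
Proof. by case: i => [[|[|//]]] ?; [left|right]; apply: val_inj. Qed.

Lemma sum_ord2 (V : nmodType) (F : 'I_2 -> V) : \sum_i F i = F 0 + F 1.
Proof. by rewrite big_ord_recl big_ord1; congr (_ + F _); apply: val_inj. Qed.

Definition circ2 (R : Type) (a b : R) : 'M[R]_2 := \matrix_(i, j) if i == j then a else b.

Lemma natmx_C_circ2 (a b : nat) : natmx_C (circ2 a b) = circ2 a%:R b%:R.
Proof. by apply/matrixP => i j; rewrite !mxE; case: (i == j). Qed.

Lemma natmx_C_inj n : injective (@natmx_C n).
Proof.
move=> A B /matrixP AB; apply/matrixP => i j.
by have /eqP := AB i j; rewrite !mxE eqr_nat => /eqP.
Qed.

Lemma circ2_affine (R : pzRingType) (c d y : R) : c%:M + d *: circ2 0 y = circ2 c (d * y).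
Proof. by apply/matrixP => i j; rewrite !mxE; case: (i == j); rewrite ?mulr0 ?addr0 ?add0r. Qed.

Lemma circ2_sym_trace0 (A : 'M[nat]_2) (x : nat) :
  A^T = A -> \tr (natmx_C A) = 0 -> natmx_C A *m natmx_C A = (x%:R ^+ 2)%:M ->
  A = circ2 0 x.
Proof.
move=> A_sym; rewrite /mxtrace sum_ord2 !mxE -natrD => /eqP.
rewrite pnatr_eq0 addn_eq0 => /andP[/eqP A00 /eqP A11] /matrixP /(_ 0 0).
rewrite !mxE sum_ord2 !mxE A00 mul0r add0r /= mulr1n -natrM -natrX => /eqP.
have A10 : A 1 0 = A 0 1 by rewrite -{1}A_sym mxE.
rewrite eqr_nat A10 mulnn eqn_exp2r // => /eqP A01.
apply/matrixP => i j; rewrite !mxE.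
by case: (ord2_cases i) => ->; case: (ord2_cases j) => -> /=; rewrite ?A00 ?A11 ?A10.
Qed.

Definition hadamard2 : 'M[algC]_2 :=
  (sqrtC 2)^-1 *: \matrix_(i, j) if (i == 1) && (j == 1) then -1 else 1.

Lemma inv_sqrtC2_sqr : (sqrtC 2)^-1 * (sqrtC 2)^-1 * 2 = 1 :> algC.
Proof. by rewrite -invfM -expr2 sqrtCK mulVf ?pnatr_eq0. Qed.

Lemma adjmx_hadamard2 : adjmx hadamard2 = hadamard2.
Proof.
apply/matrixP => i j; rewrite !mxE andbC; apply/conj_Creal/rpredM.
  by rewrite rpredV ger0_real ?sqrtC_ge0 ?ler0n.
by case: ifP; rewrite ?rpredN rpred1.
Qed.

Lemma hadamard2_involutive : hadamard2 *m hadamard2 = 1%:M.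
Proof.
apply/matrixP => i j; rewrite !mxE sum_ord2 !mxE.
move: inv_sqrtC2_sqr; move: (sqrtC 2)^-1 => t t_sqr.
by case: (ord2_cases i) => ->; case: (ord2_cases j) => -> /=;
  rewrite ?mulr1n ?mulr0n -[X in _ = X]mulr1 -[X in _ = _ * X]t_sqr; ring.
Qed.

Lemma hadamard2_circ2 (p q : algC) :
  hadamard2 *m circ2 p q *m hadamard2 = diag_mx (\row_i if i == 0 then p + q else p - q).
Proof.
apply/matrixP => i j; rewrite !mxE sum_ord2 !mxE !sum_ord2 !mxE.
move: inv_sqrtC2_sqr; move: (sqrtC 2)^-1 => t t_sqr.
by case: (ord2_cases i) => ->; case: (ord2_cases j) => -> /=;
  rewrite ?mulr1n ?mulr0n -[X in _ = X]mulr1 -[X in _ = _ * X]t_sqr; ring.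
Qed.

Definition unique_matching_nimrep (Z : 'M[int]_8) : Prop :=
  (exists n (G : prim -> 'M[nat]_n), is_nimrep G /\ matches Z G) /\
  (forall n m (G : prim -> 'M[nat]_n) (H : prim -> 'M[nat]_m),
      is_nimrep G -> matches Z G -> is_nimrep H -> matches Z H -> nimrep_equiv G H).

Section TraceTwo.

Variables (Z : 'M[int]_8) (ma mb lb : prim) (a b : prim -> nat).
Hypothesis ma_neq_mb : ma != mb.
Hypothesis Z_diag : forall nu, Z nu nu = ((nu == ma) || (nu == mb) : nat)%:Z.
Hypothesis eigS_ma : forall lam, eigS lam ma = (a lam)%:R + (b lam)%:R.
Hypothesis eigS_mb : forall lam, eigS lam mb = (a lam)%:R - (b lam)%:R.
Hypothesis a_lb : a lb = 0%N.
Hypothesis b_lb_neq0 : b lb != 0%N.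

Definition circ_nimrep (lam : prim) : 'M[nat]_2 := circ2 (a lam) (b lam).

Let mu2 (i : 'I_2) : prim := if i == 0 then ma else mb.

Lemma mxtrace_Z : \tr Z = 2.
Proof.
transitivity (\sum_nu (1 : int) *+ ((nu == ma) || (nu == mb))).
  by apply: eq_bigr => nu _; rewrite Z_diag; case: (_ || _).
by rewrite sum_indicator2.
Qed.

Lemma card_mu2 nu : #|[pred i | mu2 i == nu]| = ((nu == ma) || (nu == mb) : nat).
Proof.
rewrite -sum1_card big_mkcond sum_ord2 /mu2 /= !inE eqxx -[1 == 0]/false /=.
rewrite ![_ == nu]eq_sym; have [->|_] := eqVneq nu ma.
  by rewrite (negbTE ma_neq_mb).
by case: (nu == mb).
Qed.

Lemma circ_nimrep_diag lam :
  adjmx hadamard2 *m natmx_C (circ_nimrep lam) *m hadamard2 = eigdiag mu2 lam.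
Proof.
rewrite adjmx_hadamard2 natmx_C_circ2 hadamard2_circ2; congr diag_mx.
by apply/rowP => i; rewrite !mxE /mu2; case: (i == 0); rewrite ?eigS_ma ?eigS_mb.
Qed.

Lemma circ_nimrep_is_nimrep : is_nimrep circ_nimrep.
Proof.
have H_unitary : hadamard2 *m adjmx hadamard2 = 1%:M.
  by rewrite adjmx_hadamard2 hadamard2_involutive.
apply: (spectral_nimrep H_unitary circ_nimrep_diag) => lam.
by apply/matrixP => i j; rewrite !mxE eq_sym.
Qed.

Lemma circ_nimrep_matches : matches Z circ_nimrep.
Proof.
split; first exact: mxtrace_Z.
exists mu2, hadamard2; split => [nu||]; first by rewrite card_mu2 Z_diag.
  by rewrite adjmx_hadamard2 hadamard2_involutive.
exact: circ_nimrep_diag.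
Qed.

Lemma matches_dim n (G : prim -> 'M[nat]_n) : matches Z G -> n = 2%N.
Proof. by case; rewrite mxtrace_Z => -[]. Qed.

Lemma matching_nimrep_eq (G : prim -> 'M[nat]_2) :
  is_nimrep G -> matches Z G -> G =1 circ_nimrep.
Proof.
move=> [_ G_sym _] [_ [mu [U [mu_card U_unitary G_diag]]]].
have {}mu_card nu : #|[pred i | mu i == nu]| = ((nu == ma) || (nu == mb) : nat).
  by have := mu_card nu; rewrite Z_diag => -[].
have mu_supp i : mu i = ma \/ mu i = mb.
  have : (0 < #|[pred j | mu j == mu i]|)%N by apply/card_gt0P; exists i; rewrite inE.
  by rewrite mu_card lt0b => /orP[] /eqP; [left | right].
have G_lb : G lb = circ2 0 (b lb).
  apply: circ2_sym_trace0.
  - exact/esym/G_sym.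
  - rewrite (spectral_trace U_unitary G_diag) (sum_over_fibers mu (eigS lb)).
    under eq_bigr do rewrite mu_card.
    by rewrite sum_indicator2 // eigS_ma eigS_mb a_lb mulr0n add0r sub0r subrr.
  - apply: (spectral_sqr U_unitary G_diag) => i.
    by case: (mu_supp i) => ->; rewrite ?eigS_ma ?eigS_mb a_lb mulr0n ?add0r ?sub0r ?sqrrN.
move=> lam; apply: natmx_C_inj.
rewrite (spectral_affine U_unitary G_diag (lb := lb) (c := (a lam)%:R)
                         (d := (b lam)%:R / (b lb)%:R)).
  by rewrite G_lb natmx_C_circ2 circ2_affine mulfVK ?pnatr_eq0 // natmx_C_circ2.
move=> i; case: (mu_supp i) => ->; rewrite ?eigS_ma ?eigS_mb a_lb mulr0n ?add0r ?sub0r.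
  by rewrite mulfVK ?pnatr_eq0.
by rewrite mulrN mulfVK ?pnatr_eq0.
Qed.

Lemma trace_two_unique_matching_nimrep : unique_matching_nimrep Z.
Proof.
split.
  by exists 2%N, circ_nimrep; split; [exact: circ_nimrep_is_nimrep | exact: circ_nimrep_matches].
move=> n m G H G_nimrep G_matches H_nimrep H_matches.
move: (matches_dim G_matches) (matches_dim H_matches) => n2 m2; subst n m.
exists id; split; first by exists id.
move=> lam i j.
by rewrite (matching_nimrep_eq G_nimrep G_matches) (matching_nimrep_eq H_nimrep H_matches).
Qed.

End TraceTwo.

Definition half_sum (ma mb lam : prim) : nat := `|((eigZ lam ma + eigZ lam mb) %/ 2)%Z|%N.
Definition half_diff (ma mb lam : prim) : nat := `|((eigZ lam ma - eigZ lam mb) %/ 2)%Z|%N.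

Lemma eigZ_halves (mb lam : prim) : mb \in [:: 1; 6; 7] ->
  eigZ lam 0 = (half_sum 0 mb lam)%:Z + (half_diff 0 mb lam)%:Z /\
  eigZ lam mb = (half_sum 0 mb lam)%:Z - (half_diff 0 mb lam)%:Z.
Proof.
by rewrite !inE => /or3P[] /eqP ->; case: lam => [[|[|[|[|[|[|[|[|?]]]]]]]] ?].
Qed.

Lemma trace_two_unique_matching_nimrep_at (Z : 'M[int]_8) (mb lb : prim) :
  mb \in [:: 1; 6; 7] -> (forall nu, Z nu nu = ((nu == 0) || (nu == mb) : nat)%:Z) ->
  half_sum 0 mb lb = 0%N -> half_diff 0 mb lb != 0%N ->
  unique_matching_nimrep Z.
Proof.
move=> mb_exp Z_diag a_lb b_lb_neq0.
apply: (trace_two_unique_matching_nimrep _ Z_diag _ _ a_lb b_lb_neq0) => [|lam|lam].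
- by move: mb_exp; rewrite !inE => /or3P[] /eqP ->.
- by rewrite eigS_int (proj1 (eigZ_halves lam mb_exp)) rmorphD.
- by rewrite eigS_int (proj2 (eigZ_halves lam mb_exp)) rmorphB.
Qed.

Lemma eq_inord8 (i : prim) (k : nat) : (k < 8)%N -> (i == inord k) = (val i == k).
Proof. by move=> k_lt8; rewrite -val_eqE /= inordK. Qed.

Lemma unique_matching_nimrep_exp01 (Z : 'M[int]_8) :
  Z \in [:: Z3; Z23; Z32] -> unique_matching_nimrep Z.
Proof.
move=> Z_in; apply: (@trace_two_unique_matching_nimrep_at _ 1 6) => // nu.
move: Z_in; rewrite !inE => /or3P[] /eqP ->; rewrite !mxE ?big_ord1 !mxE !eq_inord8 //;
  by case: nu => [[|[|[|[|[|[|[|[|?]]]]]]]] ?].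
Qed.

Lemma unique_matching_nimrep_exp06 (Z : 'M[int]_8) :
  Z \in [:: Z45; Z54] -> unique_matching_nimrep Z.
Proof.
move=> Z_in; apply: (@trace_two_unique_matching_nimrep_at _ 6 1) => // nu.
move: Z_in; rewrite !inE => /orP[] /eqP ->; rewrite !mxE ?big_ord1 !mxE !eq_inord8 //;
  by case: nu => [[|[|[|[|[|[|[|[|?]]]]]]]] ?].
Qed.

Lemma unique_matching_nimrep_exp07 (Z : 'M[int]_8) :
  Z \in [:: Z45p; Z54p] -> unique_matching_nimrep Z.
Proof.
move=> Z_in; apply: (@trace_two_unique_matching_nimrep_at _ 7 1) => // nu.
move: Z_in; rewrite !inE => /orP[] /eqP ->; rewrite !mxE ?big_ord1 !mxE !eq_inord8 //;
  by case: nu => [[|[|[|[|[|[|[|[|?]]]]]]]] ?].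
Qed.

Theorem proposition6p4 :
  forall Z : 'M[int]_8, Z \in [:: Z3; Z23; Z32; Z45; Z54; Z45p; Z54p] ->
    (exists n (G : prim -> 'M[nat]_n), is_nimrep G /\ matches Z G) /\
    (forall n m (G : prim -> 'M[nat]_n) (H : prim -> 'M[nat]_m),
        is_nimrep G -> matches Z G -> is_nimrep H -> matches Z H ->
        nimrep_equiv G H).
Proof.
move=> Z; have -> : [:: Z3; Z23; Z32; Z45; Z54; Z45p; Z54p]
                   = [:: Z3; Z23; Z32] ++ [:: Z45; Z54] ++ [:: Z45p; Z54p] by [].
rewrite !mem_cat => /or3P[].
- exact: unique_matching_nimrep_exp01.
- exact: unique_matching_nimrep_exp06.
- exact: unique_matching_nimrep_exp07.
Qed.
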